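(* Let $\mathcal G$ be a core network with input nodes $\iota_1,\dots,\iota_n$ and output node $o$, fix $m$ with the vestigial subnetwork $\mathcal D_m$ nonempty, and let $\mathcal D_{m,1},\dots,\mathcal D_{m,n_m}$ be the subnetworks associated to the diagonal blocks of the Frobenius–König normal form of $J_{\mathcal D_m}$. Then for every $j=1,\dots,n_m$, $\mathcal D_{m,j}$ contains an $\iota_k$-simple node for some $k\in\{1,\dots,n\}$, $k\neq m$.
   Context: Node $b$ is downstream from $a$ (and $a$ upstream from $b$) if there is a directed path from $a$ to $b$ (every node is up/downstream from itself). $\mathcal G$ is a core network if every node is upstream from $o$ and downstream from at least one input node. $\mathcal G_m$ is the subnetwork of nodes downstream from $\iota_m$ and upstream from $o$; $\mathcal D_m$ consists of the nodes not downstream from $\iota_m$ with all arrows of $\mathcal G$ between them. A simple path visits each node at most once; an $\iota_ko$-simple path is a simple path from $\iota_k$ to $o$; a node is $\iota_k$-simple if it lies on some $\iota_ko$-simple path. Each node $j$ carries a function $f_j$; the partial derivatives $f_{j,x_\ell}$ (one per arrow $\ell\to j$, plus a self-coupling $f_{j,x_j}$ for every node) are independent indeterminates, and $J_{\mathcal K}=(f_{j,x_\ell})_{j,\ell\in\mathcal K}$. By Frobenius–König theory, there are permutation matrices with $P_mJ_{\mathcal D_m}Q_m$ block upper triangular with square fully indecomposable diagonal blocks $D_{m,j}$; each $D_{m,j}$ of order $k_j$ contains exactly $k_j$ self-couplings and after row/column permutation equals $J_{\mathcal D_{m,j}}$ for the set $\mathcal D_{m,j}$ of nodes indexing its rows,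 which (with all arrows between its nodes) is the associated subnetwork. *)

From mathcomp Require Import all_boot.
Set Implicit Arguments. Unset Strict Implicit. Unset Printing Implicit Defensive.

(* A network: finite node type V, arrows given by e : rel V
   (e a b  <=>  there is an arrow a -> b). *)

Definition downstream {V : finType} (e : rel V) (a b : V) : bool := connect e a b.

Definition core_network {V : finType} (e : rel V) (n : nat)
  (iota : 'I_n -> V) (o : V) : Prop :=
  forall v : V, downstream e v o /\ exists k : 'I_n, downstream e (iota k) v.

Definition vestigial {V : finType} (e : rel V) (n : nat)
  (iota : 'I_n -> V) (m : 'I_n) : {set V} :=
  [set v | ~~ downstream e (iota m) v].

Definition simple_path {V : finType} (e : rel V) (a b : V) (p : seq V) : Prop :=
  path e a p /\ last a p = b /\ uniq (a :: p).

Definition simple_node {V : finType} (e : rel V) (a o w : V) : Prop :=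
  exists p : seq V, simple_path e a o p /\ w \in a :: p.

(* Zero pattern of the generalized Jacobian: the entry (row j, column l)
   of J is the indeterminate f_{j,x_l}, present iff l -> j is an arrow or
   j = l (self-coupling); otherwise it is 0. *)
Definition J_nz {V : finType} (e : rel V) (j l : V) : bool := (j == l) || e l j.

(* J_B (rows and columns indexed by B) is fully indecomposable: it is
   square of order k = #|B| >= 1, for k = 1 its entry is nonzero, and it
   has no s x (k - s) zero submatrix for 1 <= s <= k - 1. Since the
   nonzero entries are independent indeterminates, being zero is a
   property of the pattern J_nz. *)
Definition fully_indecomposable {V : finType} (e : rel V) (B : {set V}) : Prop :=
  0 < #|B| /\
  (#|B| = 1 -> forall a, a \in B -> J_nz e a a) /\
  (forall S T : {set V}, S \subset B -> T \subset B ->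
     0 < #|S| < #|B| -> #|S| + #|T| = #|B| ->
     exists a b, [/\ a \in S, b \in T & J_nz e a b]).

(* Frobenius-Koenig normal form of J_{D}, described through the node sets
   of its diagonal blocks (ordered 0..r-1): the blocks partition D, each
   block is nonempty, J_D is block upper triangular w.r.t. this ordering
   (entries in row block i and column block j with j < i vanish), and each
   diagonal block J_{D_j} is fully indecomposable. *)
Definition FK_normal_form {V : finType} (e : rel V) (D : {set V})
  (r : nat) (blk : 'I_r -> {set V}) : Prop :=
  [/\ (forall i, blk i \subset D),
      (forall v, v \in D -> exists i, v \in blk i),
      (forall i j, i != j -> [disjoint blk i & blk j]),
      (forall i j : 'I_r, (j < i)%N ->
          forall a b, a \in blk i -> b \in blk j -> ~~ J_nz e a b)
    & (forall i, fully_indecomposable e (blk i))].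

(* Take a node v of the block and an input iota_k upstream of it; k <> m
   because the nodes not downstream from iota_m form an upstream-closed set.
   Walk a simple path from iota_k to the first node u of the block it meets,
   then a simple path from u to o.  A node common to both parts lies on a
   cycle through u.  Block triangularity of J_{D_m} means arrows between
   blocks only go from later to earlier blocks, so a cycle through u stays in
   the block of u; but the first part avoids the block before u.  Hence the
   concatenation is simple, and u is an iota_k-simple node of the block. *)

From mathcomp Require Import all_boot.

Set Implicit Arguments.
Unset Strict Implicit.
Unset Printing Implicit Defensive.

Section SimplePaths.

Variables (V : finType) (e : rel V).

Definition scc_closed (A : {set V}) : Prop :=
  forall x y, x \in A -> connect e x y -> connect e y x -> y \in A.

Lemma first_entry_path (A : {set V}) a p :
  path e a p -> last a p \in A ->
  exists q, [/\ path e a q, last a q \in A &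
                {in a :: q, forall x, x \in A -> x = last a q}].
Proof.
elim: p a => [|b p IH] a /=.
  by move=> _ aA; exists [::]; split=> // x; rewrite inE => /eqP.
move=> /andP[eab pb] lastA; have [aA | aNA] := boolP (a \in A).
  by exists [::]; split=> // x; rewrite inE => /eqP.
have [q [pq lastq firstq]] := IH b pb lastA.
exists (b :: q); split; rewrite /= ?eab //.
move=> x; rewrite inE => /predU1P[-> | xbq]; first by rewrite (negbTE aNA).
exact: firstq.
Qed.

Lemma simple_first_entry_path (A : {set V}) a b :
  connect e a b -> b \in A ->
  exists q, [/\ path e a q, uniq (a :: q), last a q \in A &
                {in a :: q, forall x, x \in A -> x = last a q}].
Proof.
move=> /connectP[p pab ->] bA.
have [q [pq lastq firstq]] := first_entry_path pab bA.
case: (shortenP pq) lastq firstq => s ps us sub_sq lastA firstq.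
exists s; split=> // x xs; apply: firstq.
by move: xs; rewrite !inE => /predU1P[-> | /sub_sq ->]; rewrite ?eqxx ?orbT.
Qed.

Lemma connect_to_last a p y :
  path e a p -> y \in a :: p -> connect e y (last a p).
Proof.
move=> + yp; case/splitPl: yp => p1 p2 <-.
by rewrite cat_path last_cat => /andP[_ p2y]; apply/connectP; exists p2.
Qed.

Lemma scc_closed_simple_node (A : {set V}) a o b :
  scc_closed A -> connect e a b -> b \in A -> {in A, forall u, connect e u o} ->
  exists w, w \in A /\ simple_node e a o w.
Proof.
move=> closedA ab bA to_o.
have [q [pq uq uA firstq]] := simple_first_entry_path ab bA.
set u := last a q in uA firstq.
have /connectP[p2 up2 lastp2] := to_o u uA.
case: (shortenP up2) lastp2 => q2 pq2 uq2 _ lastq2.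
exists u; split=> //; exists (q ++ q2); split; last first.
  by rewrite -cat_cons mem_cat mem_last.
split; first by rewrite cat_path pq.
split; first by rewrite last_cat.
move: uq2; rewrite cons_uniq => /andP[uNq2 uq2].
rewrite -cat_cons cat_uniq uq uq2 andbT /=.
apply/hasPn => y yq2; apply/negP => yq.
have yNu : y != u by apply: contraNneq uNq2 => <-.
have yA : y \in A.
  apply: (closedA u) => //; last exact: connect_to_last.
  by apply: (path_connect pq2); rewrite inE yq2 orbT.
by rewrite (firstq y yq yA) eqxx in yNu.
Qed.

End SimplePaths.

Section FrobeniusKoenigBlocks.

Variables (V : finType) (e : rel V) (D : {set V}) (r : nat).
Variables (blk : 'I_r -> {set V}).
Hypothesis FK : FK_normal_form e D blk.
Hypothesis D_upstream : forall x y, e x y -> y \in D -> x \in D.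

Lemma FK_block_nonempty i : exists v, v \in blk i.
Proof.
by case: FK => _ _ _ _ /(_ i) [/card_gt0P [v vi] _]; exists v.
Qed.

Lemma FK_block_index_unique x i i' : x \in blk i -> x \in blk i' -> i = i'.
Proof.
case: FK => _ _ disj _ _ xi xi'; apply/eqP/negPn/negP.
by move=> /disj /disjointFr /(_ xi); rewrite xi'.
Qed.

Lemma FK_block_upstream x y i :
  connect e x y -> y \in blk i -> exists2 i', x \in blk i' & (i <= i')%N.
Proof.
case: FK => sub cover _ triang _ /connectP[p].
elim: p x => [|z p IH] x /=; first by move=> _ -> yi; exists i.
move=> /andP[exz pz] ylast yi.
have [i'' zi'' le_ii''] := IH z pz ylast yi.
have [i' xi'] := cover x (D_upstream exz (subsetP (sub i'') z zi'')).
exists i' => //; apply: leq_trans le_ii'' _; rewrite leqNgt; apply/negP => lt.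
by have := triang _ _ lt z x zi'' xi'; rewrite /J_nz exz orbT.
Qed.

Lemma FK_block_scc_closed i : scc_closed e (blk i).
Proof.
move=> x y xi xy yx.
have [i' yi' le_ii'] := FK_block_upstream yx xi.
have [i'' xi'' le_i'i''] := FK_block_upstream xy yi'.
rewrite -(FK_block_index_unique xi xi'') in le_i'i''.
by have -> : i = i' by apply/val_inj/anti_leq; rewrite le_ii'.
Qed.

End FrobeniusKoenigBlocks.

Lemma vestigial_upstream (V : finType) (e : rel V) (n : nat)
    (iota : 'I_n -> V) (m : 'I_n) x y :
  e x y -> y \in vestigial e iota m -> x \in vestigial e iota m.
Proof.
rewrite !inE /downstream => exy; apply: contra => mx.
exact: connect_trans mx (connect1 exy).
Qed.

Theorem proposition3p8 (V : finType) (e : rel V) (n : nat)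
  (iota : 'I_n -> V) (o : V) (m : 'I_n)
  (r : nat) (blk : 'I_r -> {set V}) :
  core_network e iota o ->
  vestigial e iota m != set0 ->
  FK_normal_form e (vestigial e iota m) blk ->
  forall j : 'I_r, exists k : 'I_n,
    k != m /\ exists w, w \in blk j /\ simple_node e (iota k) o w.
Proof.
move=> core _ FK j.
case: (FK) => sub _ _ _ _.
have [v vj] := FK_block_nonempty FK j.
have [_ [k kv]] := core v.
exists k; split.
  by apply: contraTneq (subsetP (sub j) v vj) => <-; rewrite inE negbK.
apply: scc_closed_simple_node kv vj _ => [|u _]; last by case: (core u).
exact: (FK_block_scc_closed FK (vestigial_upstream (m := m)) (i := j)).
Qed.
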